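(* Let $(A,+,\circ)$ be a finite left brace of odd order with cyclic additive group and with $(A,\circ)$ a Z-group. Then every uniconnected associated cycle set $X$ of $A$ has odd size and $\mathcal{G}(X)$ is a Z-group. Conversely, every finite uniconnected cycle set of odd size whose permutation group is a Z-group is isomorphic to a uniconnected associated cycle set of such a left brace.
   Context: A left brace is a set $A$ with $(A,+)$ abelian group, $(A,\circ)$ group, $a\circ(b+c)=a\circ b-a+a\circ c$; $\lambda_a(b):=-a+a\circ b$, and $a\mapsto\lambda_a$ is a homomorphism $(A,\circ)\to\mathrm{Aut}(A,+)$. A transitive cycle base is a single orbit of this action generating $(A,+)$. A uniconnected associated cycle set of $A$ is $(A,\bullet)$, $a\bullet b:=\lambda_a(g)^{-}\circ b$ ($^{-}$ = inverse in $(A,\circ)$), for $g$ in a transitive cycle base. A cycle set: each $\sigma_x:y\mapsto x\cdot y$ bijective, $(x\cdot y)\cdot(x\cdot z)=(y\cdot x)\cdot(y\cdot z)$, squaring bijective; $\mathcal{G}(X)$ is generated by the $\sigma_x$; $X$ is uniconnected if $\mathcal{G}(X)$ acts regularly. A Z-group is a finite group all of whose Sylow subgroups are cyclic. *)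

From mathcomp Require Import all_boot all_fingroup all_solvable.
Set Implicit Arguments. Unset Strict Implicit. Unset Printing Implicit Defensive.
Local Open Scope group_scope.

(* A finite left brace: the multiplicative group (A,o) is the finGroupType gT
   (o = group product, ^- = group inverse), and the additive structure
   (A,+) is given by explicit operations add/opp/zero on the same carrier. *)
Definition is_left_brace (gT : finGroupType)
  (add : gT -> gT -> gT) (opp : gT -> gT) (zero : gT) : Prop :=
  [/\ (forall a b c, add a (add b c) = add (add a b) c),
      (forall a b, add a b = add b a),
      (forall a, add zero a = a),
      (forall a, add (opp a) a = zero)
    & (forall a b c, a * add b c = add (add (a * b) (opp a)) (a * c))].

Definition add_cyclic (gT : finGroupType) (add : gT -> gT -> gT) (zero : gT) : Prop :=
  exists c : gT, forall a : gT, exists n : nat, a = iter n (add c) zero.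

Definition blam (gT : finGroupType) (add : gT -> gT -> gT) (opp : gT -> gT)
  (a b : gT) : gT := add (opp a) (a * b).

Definition add_generates (gT : finGroupType) (add : gT -> gT -> gT)
  (opp : gT -> gT) (zero : gT) (S : {set gT}) : Prop :=
  forall H : {set gT},
    zero \in H -> (forall a b, a \in H -> b \in H -> add a b \in H) ->
    (forall a, a \in H -> opp a \in H) -> S \subset H -> H = [set: gT].

(* g lies in a transitive cycle base: its lambda-orbit generates (A,+) *)
Definition in_trans_cycle_base (gT : finGroupType) (add : gT -> gT -> gT)
  (opp : gT -> gT) (zero : gT) (g : gT) : Prop :=
  add_generates add opp zero [set blam add opp a g | a in gT].

Definition assoc_op (gT : finGroupType) (add : gT -> gT -> gT) (opp : gT -> gT)
  (g : gT) (a b : gT) : gT := (blam add opp a g)^-1 * b.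

Definition is_cycle_set (X : finType) (op : X -> X -> X) : Prop :=
  [/\ (forall x, bijective (op x)),
      (forall x y z, op (op x y) (op x z) = op (op y x) (op y z))
    & bijective (fun x => op x x)].

Definition sigma_set (X : finType) (op : X -> X -> X) : {set {perm X}} :=
  [set s : {perm X} | [exists x, [forall y, s y == op x y]]].

Definition permG (X : finType) (op : X -> X -> X) : {set {perm X}} :=
  <<sigma_set op>>.

Definition uniconnected (X : finType) (op : X -> X -> X) : Prop :=
  forall x y : X, exists! s : {perm X}, s \in permG op /\ s x = y.

(* For the associated cycle set of a brace A, each sigma_x is left
   multiplication by an element of (A,o), so G(X) is a homomorphic image of a
   subgroup of the Z-group (A,o), hence a Z-group.
   Conversely, let X be uniconnected.  Words in X represent elements of G(X), and
   concatenation of words induces a well-defined commutative addition on G(X)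
   (this is where the cycle set axiom is used), making G(X) a left brace whose
   associated cycle set, for g = sigma_e, is X via x |-> the unique s in G(X)
   with s x = e.  It remains to see that a brace A of odd order with (A,o) a
   Z-group has cyclic additive group.  The p-torsion Om of (A,+) is a subgroup
   of (A,o), hence cyclic of order p^r.  For a in Om, lambda_a has p-power order
   on Om, so N = lambda_a - 1 is nilpotent there, of index at most r since the
   images N^j(Om) decrease strictly until they vanish.  Then
     a^m = sum_(i<m) lambda_a^i(a) = sum_(j<m) C(m, j+1) N^j(a),
   and for m = p^(r-1) all terms vanish when p > 2 and r >= 2 (as r < p^(r-1)),
   contradicting cyclicity of Om.  So |Om| <= p for every p and (A,+) is
   cyclic. *)

From HB Require Import structures.
From mathcomp Require Import all_boot all_fingroup all_solvable ssralg finalg.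
From mathcomp Require Import zify.
Set Implicit Arguments. Unset Strict Implicit. Unset Printing Implicit Defensive.
Import GRing.Theory.

Lemma prime_dvd_bin_exp p k j : prime p -> 0 < j < p ^ k -> p %| 'C(p ^ k, j).
Proof.
move=> p_pr /andP[]; case: j => // j _ lt_j.
have: p ^ k %| j.+1 * 'C(p ^ k, j.+1) by rewrite -mul_bin_diag dvdn_mulr.
apply: contraLR => p'C; rewrite Gauss_dvdl ?coprimeXl ?prime_coprime //.
by rewrite gtnNdvd.
Qed.

Lemma ltn_exp_pred p r : 2 < p -> 1 < r -> r < p ^ r.-1.
Proof.
move=> p_gt2; case: r => // [] [] // r _; elim: r => [|r IHr]; first by rewrite expn1.
by rewrite expnS; move: IHr; set q := p ^ _; nia.
Qed.

Section IterBinomial.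
Local Open Scope ring_scope.
Variables (V : zmodType) (f : {additive V -> V}).
Local Notation g := (fun y => f y + y).

Lemma iter_raddf0 j : iter j f 0 = 0.
Proof. by apply: iter_fix; rewrite raddf0. Qed.

Lemma iter_addr_binomial i x :
  iter i g x = \sum_(0 <= j < i.+1) iter j f x *+ 'C(i, j).
Proof.
elim: i => [|i IHi]; first by rewrite big_nat1.
have shift : \sum_(0 <= j < i.+1) iter j f x *+ 'C(i, j) =
             x + \sum_(0 <= j < i.+1) iter j.+1 f x *+ 'C(i, j.+1).
  rewrite big_nat_recl // [in RHS]big_nat_recr //=.
  by rewrite (bin_small (ltnSn _)) mulr0n addr0 bin0.
rewrite iterS IHi raddf_sum; under eq_bigr do rewrite raddfMn.
rewrite shift [in RHS]big_nat_recl // bin0; under [in RHS]eq_bigr do rewrite binS mulrnDr.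
by rewrite big_split /= mulr1n addrCA [X in _ + X]addrC.
Qed.

Lemma sum_iter_addr_binomial m x :
  \sum_(0 <= i < m) iter i g x = \sum_(0 <= j < m) iter j f x *+ 'C(m, j.+1).
Proof.
elim: m => [|m IHm]; first by rewrite !big_geq.
rewrite big_nat_recr //= IHm iter_addr_binomial.
under [in RHS]eq_bigr do rewrite binS mulrnDr.
by rewrite big_split /= [in RHS]big_nat_recr //= (bin_small (ltnSn _)) mulr0n addr0.
Qed.

Variables (p : nat) (x : V).
Hypotheses (p_pr : prime p) (p_torsion : forall j, iter j f x *+ p = 0).

Let torsion_dvd j n : p %| n -> iter j f x *+ n = 0.
Proof. by case/dvdnP=> q ->; rewrite mulnC mulrnA p_torsion mul0rn. Qed.

Lemma iter_addr_pexp k : iter (p ^ k) g x = iter (p ^ k) f x + x.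
Proof.
have pk_gt0 : 0 < p ^ k by rewrite expn_gt0 prime_gt0.
rewrite iter_addr_binomial big_nat_recr //= big_ltn // big1_seq ?addr0.
  by rewrite binn bin0 addrC.
move=> j /andP[_]; rewrite mem_index_iota => j_range.
by apply: torsion_dvd; apply: prime_dvd_bin_exp.
Qed.

Lemma sum_iter_addr_pexp k : \sum_(0 <= i < p ^ k) iter i g x = iter (p ^ k).-1 f x.
Proof.
have pk_gt0 : 0 < p ^ k by rewrite expn_gt0 prime_gt0.
rewrite sum_iter_addr_binomial -[in LHS](prednK pk_gt0) big_nat_recr //=.
rewrite prednK // binn big1_seq ?add0r // => j /andP[_]; rewrite mem_index_iota => j_range.
by apply: torsion_dvd; apply: prime_dvd_bin_exp; lia.
Qed.

End IterBinomial.

Lemma descent_reaches0 (n : nat -> nat) :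
  (forall j, n j.+1 <= n j) -> (forall j, n j.+1 = n j -> n j = 0) -> n (n 0) = 0.
Proof.
move=> le_n stall0; suff le_sub j : n j <= n 0 - j.
  by have := le_sub (n 0); rewrite subnn leqn0 => /eqP.
elim: j => [|j IHj]; first by rewrite subn0.
have [lt_n | ge_n] := ltnP (n j.+1) (n j); first by lia.
have := stall0 j; have := le_n j; lia.
Qed.

Local Open Scope group_scope.

Section NilpotentEndomorphism.
Variables (gT : finGroupType) (p : nat) (P : {group gT}) (f : {morphism P >-> gT}).
Hypotheses (pP : p.-group P) (fP : f @* P \subset P).

Let image j : {group gT} := iter j (fun G : {group gT} => f @* G) P.

Let image_sub j : image j \subset P.
Proof. by elim: j => //= j IHj; apply: subset_trans (morphimS f IHj) fP. Qed.

Let image_subS j : image j.+1 \subset image j.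
Proof. by elim: j => //= j IHj; apply: morphimS. Qed.

Let image_imset j : image j :=: [set iter j f x | x in P].
Proof.
elim: j => [|j IHj]; first by rewrite imset_id.
by rewrite /= morphimEsub ?image_sub // IHj -imset_comp.
Qed.

Let iter_in j x : x \in P -> iter j f x \in P.
Proof. by move=> Px; apply: (subsetP (image_sub j)); rewrite image_imset imset_f. Qed.

Let logn_image j := logn p #|image j|.

Let card_image j : #|image j| = (p ^ logn_image j)%N.
Proof. exact: card_pgroup (pgroupS (image_sub j) pP). Qed.

Lemma nilpotent_morphism_logn K :
    (forall x, x \in P -> iter K f x = 1) ->
  forall x, x \in P -> iter (logn p #|P|) f x = 1.
Proof.
move=> nilK.
have stable j k : image j.+1 = image j -> image (k + j) = image j.
  by move=> eq_j; elim: k => //= k IHk; rewrite IHk.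
have stall0 j : logn_image j.+1 = logn_image j -> logn_image j = 0.
  move=> eq_logn; have eq_j : image j.+1 = image j.
    by apply/val_inj/eqP; rewrite eqEcard image_subS !card_image eq_logn /=.
  suff triv_j : image j = 1%G by rewrite /logn_image triv_j cards1 logn1.
  apply/val_inj/trivgP; rewrite -(stable j K eq_j) image_imset.
  by apply/subsetP=> _ /imsetP[x Px ->]; rewrite iterD nilK ?inE ?iter_in.
have /card1_trivg triv_r : #|image (logn p #|P|)| = 1%N.
  by rewrite card_image (descent_reaches0 _ stall0) // => j; apply/dvdn_leq_log/cardSg.
move=> x Px; have : iter (logn p #|P|) f x \in image (logn p #|P|).
  by rewrite image_imset imset_f.
by rewrite triv_r => /set1gP.
Qed.
End NilpotentEndomorphism.

Section LeftBraceAdditiveGroup.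
Variables (gT : finGroupType) (add : gT -> gT -> gT) (opp : gT -> gT) (zero : gT).
Hypothesis braceA : is_left_brace add opp zero.

(* The carrier of gT with the additive structure of the brace: a finZmodType,
   hence also the finGroupType of (A,+).  On brace_zmod, [*] therefore denotes
   [+], and the product of (A,o) must be written with an explicit [gT]. *)
Definition brace_zmod : Type := gT.
HB.instance Definition _ := Finite.on brace_zmod.
Let addA : associative (add : brace_zmod -> brace_zmod -> brace_zmod).
Proof. by case: braceA. Qed.
Let addC : commutative (add : brace_zmod -> brace_zmod -> brace_zmod).
Proof. by case: braceA. Qed.
Let add0 : left_id (zero : brace_zmod) add. Proof. by case: braceA. Qed.
Let addN : left_inverse (zero : brace_zmod) opp add. Proof. by case: braceA. Qed.
HB.instance Definition _ := GRing.isZmodule.Build brace_zmod addA addC add0 addN.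
HB.instance Definition _ := [finGroupMixin of brace_zmod for +%R].

Local Open Scope ring_scope.
Local Notation "a ∘ b" := (@mulg gT a b : brace_zmod) (at level 40, left associativity).

Implicit Types a b x y : brace_zmod.

Definition lam a : brace_zmod -> brace_zmod := blam add opp a.

Lemma lamE a x : lam a x = - a + a ∘ x. Proof. by []. Qed.

Lemma circE a x : a ∘ x = a + lam a x. Proof. by rewrite lamE addNKr. Qed.

Lemma circD a x y : a ∘ (x + y) = a ∘ x - a + a ∘ y. Proof. by case: braceA. Qed.

Lemma lamD a : {morph lam a : x y / x + y}.
Proof. by move=> x y; rewrite !lamE circD !addrA. Qed.

Lemma lam0 a : lam a 0 = 0.
Proof. by apply: (addrI (lam a 0)); rewrite -lamD !addr0. Qed.

HB.instance Definition _ a :=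
  GRing.isNmodMorphism.Build brace_zmod brace_zmod (lam a) (lam0 a, lamD a).

Lemma brace_zero_one : (0 : brace_zmod) = 1%g :> gT.
Proof. by rewrite -[LHS](@mul1g gT (0 : brace_zmod)) circE raddf0 addr0. Qed.

Lemma lamM a b : lam (a ∘ b) =1 lam a \o lam b.
Proof.
move=> x; apply: (@addrI _ (a ∘ b)); rewrite -circE -mulgA /=.
by rewrite [b ∘ x]circE circD [a ∘ lam b x]circE addrA subrK.
Qed.

Lemma lam1 : lam (1%g : gT) =1 id.
Proof. by move=> x; rewrite lamE mul1g -brace_zero_one oppr0 add0r. Qed.

Lemma lamX (a : gT) n : lam (a ^+ n)%g =1 iter n (lam a).
Proof. by elim: n => [|n IHn] x; rewrite ?expg0 ?lam1 // expgS lamM /= IHn. Qed.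

Lemma expg_sum (a : gT) m :
  (a ^+ m)%g = \sum_(0 <= i < m) iter i (lam a) a :> brace_zmod.
Proof.
elim: m => [|m IHm]; first by rewrite big_geq // brace_zero_one.
by rewrite expgS circE IHm raddf_sum big_nat_recl.
Qed.

Definition lam_diff a x := lam a x - x.

Lemma lam_diff0 a : lam_diff a 0 = 0.
Proof. by rewrite /lam_diff raddf0 subrr. Qed.

Lemma lam_diffD a : {morph lam_diff a : x y / x + y}.
Proof. by move=> x y; rewrite /lam_diff raddfD opprD addrACA. Qed.

HB.instance Definition _ a :=
  GRing.isNmodMorphism.Build brace_zmod brace_zmod (lam_diff a) (lam_diff0 a, lam_diffD a).

Lemma lam_as_diff a : lam a =1 (fun y => lam_diff a y + y).
Proof. by move=> x; rewrite subrK. Qed.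

Section Torsion.
Variable p : nat.
Hypothesis p_pr : prime p.

Definition torsion : {group brace_zmod} :=
  Group (group_Ldiv p (FinRing.zmod_abelian [set: brace_zmod])).

Lemma mem_torsion x : (x \in torsion) = (x *+ p == 0).
Proof. by rewrite !inE. Qed.

Lemma torsion_pgroup : p.-group torsion.
Proof.
rewrite -pnat_exponent (pnat_dvd _ (pnat_id p_pr)) //.
by apply/exponentP=> x; rewrite mem_torsion => /eqP.
Qed.

Lemma lam_torsion a x : x \in torsion -> lam a x \in torsion.
Proof. by rewrite !mem_torsion -raddfMn => /eqP->; rewrite raddf0. Qed.

Lemma torsion_circ_closed : group_set (torsion : {set gT}).
Proof.
apply/group_setP; split=> [|a x ta tx]; first by rewrite -brace_zero_one mem_torsion mul0rn.
by rewrite circE; apply: (@groupM _ torsion); rewrite ?lam_torsion.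
Qed.

Definition torsion_circ : {group gT} := Group torsion_circ_closed.

Lemma cyclic_torsion_circ : Zgroup [set: gT] -> cyclic torsion_circ.
Proof.
move=> ZgT; have pT : p.-group torsion_circ := torsion_pgroup.
have [P sylP sTP] := Sylow_superset (subsetT torsion_circ) pT.
apply: cyclicS sTP _; apply: (forall_inP ZgT); apply/SylowP; exists p => //.
Qed.

Lemma iter_lam_diff_torsion a j x : x \in torsion -> iter j (lam_diff a) x \in torsion.
Proof.
move=> tx; elim: j => //= j IHj.
by apply: (@groupM _ torsion); rewrite ?lam_torsion ?(@groupV _ torsion).
Qed.

Lemma iter_lam_diff_mulrn a x :
  x \in torsion -> forall j, iter j (lam_diff a) x *+ p = 0.
Proof. by move=> tx j; apply/eqP; rewrite -mem_torsion iter_lam_diff_torsion. Qed.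

Let r := logn p #|torsion|.

Let card_torsion_circ : #|torsion_circ| = (p ^ r)%N.
Proof. exact: card_pgroup torsion_pgroup. Qed.

Section FixedElement.
Variable a : gT.
Hypothesis a_torsion : a \in torsion_circ.

Let iter_lam_pexp_id x : iter (p ^ r) (lam a) x = x.
Proof. by rewrite -lamX -card_torsion_circ expg_cardG // lam1. Qed.

Lemma iter_lam_diff_pexp x : x \in torsion -> iter (p ^ r) (lam_diff a) x = 0.
Proof.
move=> tx; have := iter_addr_pexp p_pr (iter_lam_diff_mulrn a tx) r.
rewrite -(eq_iter (lam_as_diff a)) iter_lam_pexp_id.
by move=> /(congr1 (fun y => y - x)); rewrite addrK subrr.
Qed.

Lemma iter_lam_diff_logn x : x \in torsion -> iter r (lam_diff a) x = 0.
Proof.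
pose N := @Morphism _ _ torsion (lam_diff a) (in2W (raddfD (lam_diff a))).
apply: (nilpotent_morphism_logn (f := N) torsion_pgroup _ iter_lam_diff_pexp).
apply/subsetP=> _ /morphimP[y _ ty ->].
exact: (iter_lam_diff_torsion a 1 ty).
Qed.

Lemma torsion_circ_expg_pred : (2 < p)%N -> (1 < r)%N -> (a ^+ (p ^ r.-1)%N)%g = 1%g.
Proof.
move=> p_gt2 r_gt1; rewrite -brace_zero_one expg_sum.
under eq_bigr do rewrite (eq_iter (lam_as_diff a)).
rewrite (sum_iter_addr_pexp p_pr (iter_lam_diff_mulrn a a_torsion)).
have le_r : (r <= (p ^ r.-1).-1)%N.
  by rewrite -ltnS prednK ?expn_gt0 ?prime_gt0 //; apply: ltn_exp_pred.
by rewrite -(subnK le_r) iterD (iter_lam_diff_logn a_torsion) iter_raddf0.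
Qed.

End FixedElement.

Lemma logn_torsion_le1 : odd #|gT| -> Zgroup [set: gT] -> (r <= 1)%N.
Proof.
move=> odd_gT ZgT; rewrite leqNgt; apply/negP=> r_gt1.
have p_gt2 : (2 < p)%N.
  have p_dvd_gT : (p %| #|gT|)%N.
    rewrite -cardsT; apply: (dvdn_trans _ (cardSg (subsetT torsion_circ))).
    by rewrite card_torsion_circ dvdn_exp // ltnW.
  have p_neq2 : p != 2 by apply: contraL p_dvd_gT => /eqP->; rewrite dvdn2 negbK.
  by have := prime_gt1 p_pr; lia.
have: (exponent torsion_circ %| p ^ r.-1)%N.
  by apply/exponentP=> a ta; apply: torsion_circ_expg_pred.
rewrite exponent_cyclic ?cyclic_torsion_circ // card_torsion_circ.
by rewrite dvdn_Pexp2l ?prime_gt1 //; lia.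
Qed.

End Torsion.

Lemma brace_add_cyclic : odd #|gT| -> Zgroup [set: gT] -> add_cyclic add zero.
Proof.
move=> odd_gT ZgT; have /cyclicP[c gen_c] : cyclic [set: brace_zmod].
  rewrite abelian_rank1_cyclic ?FinRing.zmod_abelian //.
  have [p p_pr ->] := rank_witness [set: brace_zmod].
  have [E /pnElemP[_ /and3P[_ _ expE] <-]] := p_rank_witness p [set: brace_zmod].
  apply: leq_trans (logn_torsion_le1 p_pr odd_gT ZgT).
  by rewrite dvdn_leq_log ?cardG_gt0 ?cardSg // subsetI subsetT sub_LdivT.
exists c => a; have /cycleP[i ->] : a \in <[c]>%g by rewrite -gen_c inE.
by exists i; apply: esym (iter_addr_0 i c).
Qed.
End LeftBraceAdditiveGroup.

Section CycleSetBrace.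
Variables (X : finType) (op : X -> X -> X).
Hypothesis cycle_setX : is_cycle_set op.

Let op_inj x : injective (op x).
Proof. by case: cycle_setX => bij_op _ _; apply: bij_inj. Qed.

Definition sigma x : {perm X} := perm (@op_inj x).

Lemma sigmaE x y : sigma x y = op x y. Proof. exact: permE. Qed.

Definition cycle_group : {group {perm X}} := <<sigma_set op>>%G.
Local Notation G := cycle_group.

Lemma sigma_in x : sigma x \in G.
Proof.
by apply/mem_gen; rewrite inE; apply/existsP; exists x; apply/forallP=> y; rewrite sigmaE.
Qed.

(* word_perm [:: x_1; ...; x_n] represents sigma_(x_1) + ... + sigma_(x_n) in
   the brace G(X): each letter is read relative to the permutation of the
   preceding prefix, s_(k+1) = s_k * sigma (s_k x_(k+1)). *)
Definition word_perm (w : seq X) : {perm X} :=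
  foldl (fun (s : {perm X}) b => s * sigma (s b)) 1 w.

Lemma word_perm_cat w v :
  word_perm (w ++ v) = word_perm w * word_perm (map (word_perm w) v).
Proof.
rewrite /word_perm foldl_cat -/(word_perm w); move: (word_perm w) => s.
elim/last_ind: v => [|v b IHv]; first by rewrite mulg1.
by rewrite map_rcons !foldl_rcons IHv permM mulgA.
Qed.

Lemma word_perm1 x : word_perm [:: x] = sigma x.
Proof. by rewrite /word_perm /= mul1g perm1. Qed.

Lemma word_perm_rcons w b : word_perm (rcons w b) = word_perm w * sigma (word_perm w b).
Proof. by rewrite -cats1 word_perm_cat word_perm1. Qed.

Lemma word_perm_in w : word_perm w \in G.
Proof.
by elim/last_ind: w => [|w b IHw]; rewrite ?group1 // word_perm_rcons groupM ?sigma_in.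
Qed.

Lemma word_perm_swap u a b v :
  word_perm (u ++ a :: b :: v) = word_perm (u ++ b :: a :: v).
Proof.
have swap2 c d : word_perm [:: c; d] = word_perm [:: d; c].
  apply/permP=> z; rewrite /word_perm /= !mul1g !perm1 !permM !sigmaE.
  by case: cycle_setX => _ ->.
rewrite !word_perm_cat /= -[_ :: _ :: _]/([:: _; _] ++ _) -[_ :: _ :: map _ v]/([:: _; _] ++ _).
by rewrite !word_perm_cat swap2.
Qed.

Lemma word_perm_front u w a v :
  word_perm (u ++ w ++ a :: v) = word_perm (u ++ a :: w ++ v).
Proof. by elim: w u => //= c w IHw u; rewrite -cat_rcons IHw cat_rcons word_perm_swap. Qed.

Lemma word_perm_perm u s t : perm_eq s t -> word_perm (u ++ s) = word_perm (u ++ t).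
Proof.
elim: s u t => [|a s IHs] u t; first by rewrite perm_sym => /perm_nilP->.
move=> eq_st; have a_t : a \in t by rewrite -(perm_mem eq_st) mem_head.
move: eq_st; case/splitPr: a_t => t1 t2 eq_st.
have /IHs eq_s : perm_eq s (t1 ++ t2).
  by rewrite -(perm_cons a); apply: perm_trans eq_st _; rewrite -cat1s perm_catCA.
by rewrite -cat_rcons eq_s cat_rcons word_perm_front.
Qed.

Lemma word_perm_catC w v : word_perm (w ++ v) = word_perm (v ++ w).
Proof. by apply: (word_perm_perm [::]); rewrite perm_catC. Qed.

Lemma word_perm_cat_congr w w' v v' : word_perm w = word_perm w' ->
  word_perm v = word_perm v' -> word_perm (w ++ v) = word_perm (w' ++ v').
Proof.
move=> eq_w eq_v; rewrite word_perm_cat eq_w -word_perm_cat word_perm_catC.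
by rewrite word_perm_cat eq_v -word_perm_cat word_perm_catC.
Qed.

Lemma word_perm_surj s : s \in G -> exists w, word_perm w = s.
Proof.
case/gen_prodgP=> n [c sigma_c ->]; elim: n c sigma_c => [|n IHn] c sigma_c.
  by exists [::]; rewrite big_ord0.
rewrite big_ord_recr /=; have [w <-] := IHn _ (fun i => sigma_c (widen_ord (leqnSn n) i)).
have := sigma_c ord_max; rewrite inE => /existsP[x /forallP c_x].
have -> : c ord_max = sigma x by apply/permP=> y; rewrite sigmaE (eqP (c_x y)).
by exists (rcons w ((word_perm w)^-1 x)); rewrite word_perm_rcons permKV.
Qed.

Let word_exists (u : subg_of G) : exists w, word_perm w == sgval u.
Proof. by have [w <-] := word_perm_surj (subgP u); exists w. Qed.

Definition word u : seq X := xchoose (word_exists u).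

Lemma word_permK u : word_perm (word u) = sgval u.
Proof. exact/eqP/(xchooseP (word_exists u)). Qed.

Lemma word_perm_subgK w : sgval (subg G (word_perm w)) = word_perm w.
Proof. exact: subgK (word_perm_in w). Qed.

Definition cycle_add (u v : subg_of G) : subg_of G := subg G (word_perm (word u ++ word v)).

Definition cycle_opp (u : subg_of G) : subg_of G :=
  subg G (word_perm (map (sgval u)^-1 (word u^-1))).

Lemma val_cycle_add u v w w' : word_perm w = sgval u -> word_perm w' = sgval v ->
  sgval (cycle_add u v) = word_perm (w ++ w').
Proof.
move=> eq_u eq_v; rewrite word_perm_subgK.
by apply: word_perm_cat_congr; rewrite word_permK ?eq_u ?eq_v.
Qed.

Lemma val_mul u v w : word_perm w = sgval v ->
  sgval (u * v) = word_perm (word u ++ map (sgval u)^-1 w).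
Proof.
move=> eq_v; rewrite word_perm_cat word_permK -map_comp (eq_map (permKV _)) map_id.
by rewrite eq_v.
Qed.

Lemma cycle_addA : associative cycle_add.
Proof.
move=> u v w; apply: subg_inj.
rewrite (@val_cycle_add _ _ (word u) (word v ++ word w)) ?word_permK //; last first.
  by rewrite (val_cycle_add (word_permK v) (word_permK w)).
rewrite (@val_cycle_add _ _ (word u ++ word v) (word w)) ?word_permK ?catA //.
by rewrite (val_cycle_add (word_permK u) (word_permK v)).
Qed.

Lemma cycle_addC : commutative cycle_add.
Proof. by move=> u v; apply: subg_inj; rewrite !word_perm_subgK word_perm_catC. Qed.

Lemma cycle_add0 : left_id 1 cycle_add.
Proof. by move=> u; apply: subg_inj; rewrite (@val_cycle_add _ _ [::] (word u)) ?word_permK. Qed.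

Lemma cycle_addN : left_inverse 1 cycle_opp cycle_add.
Proof.
move=> u; apply: subg_inj; rewrite cycle_addC.
rewrite (val_cycle_add (word_permK u) (esym (word_perm_subgK _))).
by rewrite -(val_mul _ (word_permK _)) mulgV.
Qed.

Lemma cycle_mulDr a b c : cycle_add (a * cycle_add b c) a = cycle_add (a * b) (a * c).
Proof.
have val_mulK u := esym (val_mul a (word_permK u)).
have val_mul_add := esym (val_mul a (esym (word_perm_subgK (word b ++ word c)))).
apply: subg_inj; rewrite (val_cycle_add val_mul_add (word_permK a)).
rewrite (val_cycle_add (val_mulK b) (val_mulK c)).
by rewrite map_cat -!catA; apply: word_perm_perm; rewrite perm_cat2l perm_catC.
Qed.

Lemma cycle_set_brace : is_left_brace cycle_add cycle_opp 1.
Proof.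
split; [exact: cycle_addA | exact: cycle_addC | exact: cycle_add0 | exact: cycle_addN |] => a b c.
rewrite -(cycle_addA (a * b)) (cycle_addC (cycle_opp a)) cycle_addA -cycle_mulDr.
by rewrite -cycle_addA (cycle_addC a) cycle_addN (cycle_addC _ 1) cycle_add0.
Qed.

Lemma val_subg_sigma x : sgval (subg G (sigma x)) = word_perm [:: x].
Proof. by rewrite word_perm1 subgK ?sigma_in. Qed.

Section Uniconnected.
Hypothesis uniconnectedX : uniconnected op.
Variable e : X.

Definition base : subg_of G := subg G (sigma e).

Lemma uniconnected_eq x s t : s \in G -> t \in G -> s x = t x -> s = t.
Proof.
move=> sG tG eq_x; have [s0 [_ uniq_s0]] := uniconnectedX x (t x).
by rewrite -(uniq_s0 s (conj sG eq_x)) (uniq_s0 t (conj tG erefl)).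
Qed.

Lemma blam_base a : blam cycle_add cycle_opp a base = subg G (sigma ((sgval a)^-1 e)).
Proof.
rewrite /blam; have -> : a * base = cycle_add a (subg G (sigma ((sgval a)^-1 e))).
  apply: subg_inj; rewrite (val_mul a (esym (val_subg_sigma e))).
  by rewrite (val_cycle_add (word_permK a) (esym (val_subg_sigma _))).
by rewrite cycle_addA cycle_addN cycle_add0.
Qed.

Lemma base_trans_cycle_base : in_trans_cycle_base cycle_add cycle_opp 1 base.
Proof.
move=> H H1 H_add _ base_H; apply/setP=> u; rewrite inE.
have -> : u = subg G (word_perm (word u)) by rewrite word_permK sgvalK.
elim/last_ind: (word u) => [|w b IHw].
  suff -> : subg G (word_perm [::]) = 1 by [].
  exact: morph1.
have -> : subg G (word_perm (rcons w b)) =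
          cycle_add (subg G (word_perm w)) (subg G (sigma b)).
  apply: subg_inj; rewrite -cats1 word_perm_subgK.
  by rewrite (val_cycle_add (esym (word_perm_subgK w)) (esym (val_subg_sigma b))).
apply: H_add => //; apply: (subsetP base_H); apply/imsetP.
have [s [[sG sb] _]] := uniconnectedX b e.
by exists (subg G s) => //; rewrite blam_base subgK // -sb permK.
Qed.

Let stabilizer_exists x : exists s, (s \in G) && (s x == e).
Proof. by have [s [[sG sx] _]] := uniconnectedX x e; exists s; rewrite sG sx eqxx. Qed.

Definition to_brace x : subg_of G := subg G (xchoose (stabilizer_exists x)).

Lemma to_braceE x : sgval (to_brace x) \in G /\ sgval (to_brace x) x = e.
Proof.
have /andP[sG /eqP sx] := xchooseP (stabilizer_exists x).
by rewrite /to_brace subgK.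
Qed.

Lemma to_brace_bij : bijective to_brace.
Proof.
exists (fun u : subg_of G => (sgval u)^-1 e) => [x | u].
  by have [_ <-] := to_braceE x; rewrite permK.
apply: subg_inj; have [sG sx] := to_braceE ((sgval u)^-1 e).
by apply: (uniconnected_eq (x := (sgval u)^-1 e)); rewrite ?subgP ?permKV.
Qed.

Lemma to_brace_op x y :
  to_brace (op x y) = assoc_op cycle_add cycle_opp base (to_brace x) (to_brace y).
Proof.
have [_ sx] := to_braceE x; have [_ sy] := to_braceE y; have [_ sxy] := to_braceE (op x y).
rewrite /assoc_op blam_base -[in sigma _]sx permK; apply: subg_inj.
apply: (uniconnected_eq (x := op x y)); rewrite ?subgP // sxy /= subgK ?sigma_in //.
by rewrite permM -sigmaE permK sy.
Qed.

End Uniconnected.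
End CycleSetBrace.

Section AssocCycleSetPermGroup.
Variable gT : finGroupType.

Definition left_transl (h : gT) : {perm gT} := perm (mulgI h^-1).

Lemma left_translM : {in [set: gT] &, {morph left_transl : h k / h * k}}.
Proof. by move=> h k _ _; apply/permP=> z; rewrite permM !permE /= invMg mulgA. Qed.

Canonical left_transl_morphism := Morphism left_translM.

Lemma Zgroup_permG_assoc_op (add : gT -> gT -> gT) opp g :
  Zgroup [set: gT] -> Zgroup (permG (assoc_op add opp g)).
Proof.
move=> ZgT; rewrite /permG; set S := [set blam add opp a g | a in gT].
have -> : sigma_set (assoc_op add opp g) = left_transl @* S.
  apply/setP=> s; rewrite inE (morphimEsub _ (subsetT S)); apply/existsP/imsetP.
    case=> x /forallP s_x; exists (blam add opp x g); first exact: imset_f.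
    by apply/permP=> y; rewrite (eqP (s_x y)) permE.
  by case=> _ /imsetP[a _ ->] ->; exists a; apply/forallP=> y; rewrite permE.
by rewrite -morphim_gen ?subsetT // morphim_Zgroup // (ZgroupS (subsetT _)).
Qed.

End AssocCycleSetPermGroup.

Theorem mainTheorem11 :
  (forall (gT : finGroupType) (add : gT -> gT -> gT) (opp : gT -> gT) (zero : gT),
     is_left_brace add opp zero ->
     odd #|gT| -> add_cyclic add zero -> Zgroup [set: gT] ->
     forall g : gT, in_trans_cycle_base add opp zero g ->
       odd #|gT| /\ Zgroup (permG (assoc_op add opp g)))
  /\
  (forall (X : finType) (op : X -> X -> X),
     is_cycle_set op -> uniconnected op -> odd #|X| -> Zgroup (permG op) ->
     exists (gT : finGroupType) (add : gT -> gT -> gT) (opp : gT -> gT) (zero : gT),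
       [/\ is_left_brace add opp zero, odd #|gT|, add_cyclic add zero,
           Zgroup [set: gT] &
       exists g : gT, in_trans_cycle_base add opp zero g /\
         exists f : X -> gT, bijective f /\
           forall x y : X, f (op x y) = assoc_op add opp g (f x) (f y)]).
Proof.
split=> [gT add opp zero _ odd_gT _ ZgT g _ | X op cycle_setX uniconnectedX odd_X ZgX].
  by split; last exact: Zgroup_permG_assoc_op.
have /card_gt0P[e _] : 0 < #|X| by rewrite odd_gt0.
have odd_B : odd #|subg_of (cycle_group op)|.
  by rewrite -(bij_eq_card (to_brace_bij uniconnectedX e)).
have ZgB : Zgroup [set: subg_of (cycle_group op)] by rewrite -im_subg morphim_Zgroup.
have braceB := cycle_set_brace cycle_setX.
exists (subg_of (cycle_group op)), (cycle_add cycle_setX), (cycle_opp cycle_setX), 1.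
split=> //; first exact: brace_add_cyclic braceB odd_B ZgB.
exists (base cycle_setX e); split; first exact: base_trans_cycle_base.
exists (to_brace uniconnectedX e); split; first exact: to_brace_bij.
exact: to_brace_op.
Qed.
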